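(* Let $M$ be a matroid on a finite set $E$ with $r(M)>0$. Then $M$ is a unique expansion matroid if and only if $M$ is a unique partition matroid, i.e. there exists a partition $P$ of the set $\cup P\subseteq E$ such that $\mathcal{I}(M)=\{X\subseteq \cup P: |X\cap D|\le 1\text{ for all } D\in P\}$.
   Context: For a matroid $M=(E,\mathcal{I})$: $\mathcal{I}(M)$ is its family of independent sets, $\mathcal{B}(M)$ its bases, $r(M)$ the size of a base. For $r(M)>0$, $s(M)=\{A\in\mathcal{I}(M): |A|=r(M)-1\}$. $M$ is a unique expansion matroid if for every $B\in\mathcal{B}(M)$ and every $A\in s(M)$, whenever $e_1,e_2\in B$ satisfy $A\cup\{e_1\}\in\mathcal{B}(M)$ and $A\cup\{e_2\}\in\mathcal{B}(M)$, then $e_1=e_2$. For a set family $S$, $\cup S=\bigcup_{X\in S}X$; a partition of a set $U$ is a family of nonempty pairwise disjoint subsets of $U$ with union $U$. *)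

From mathcomp Require Import all_boot.
Set Implicit Arguments. Unset Strict Implicit. Unset Printing Implicit Defensive.

Definition is_matroid (T : finType) (E : {set T}) (I : {set {set T}}) : Prop :=
  [/\ (forall X : {set T}, X \in I -> X \subset E),
      set0 \in I,
      (forall X Y : {set T}, Y \in I -> X \subset Y -> X \in I) &
      (forall X Y : {set T}, X \in I -> Y \in I -> #|X| < #|Y| ->
         exists2 e, e \in Y :\: X & e |: X \in I)].

Definition mrank (T : finType) (I : {set {set T}}) : nat :=
  \max_(X in I) #|X|.

(* bases: the maximal independent sets (equivalently those of size r(M)) *)
Definition bases (T : finType) (I : {set {set T}}) : {set {set T}} :=
  [set B in I | #|B| == mrank I].

Definition sfam (T : finType) (I : {set {set T}}) : {set {set T}} :=
  [set A in I | #|A| == (mrank I).-1].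

Definition unique_expansion (T : finType) (I : {set {set T}}) : Prop :=
  forall (B A : {set T}) (e1 e2 : T), B \in bases I -> A \in sfam I ->
    e1 \in B -> e2 \in B ->
    e1 |: A \in bases I -> e2 |: A \in bases I -> e1 = e2.

Definition unique_partition (T : finType) (E : {set T}) (I : {set {set T}})
  : Prop :=
  exists P : {set {set T}},
    [/\ partition P (cover P), cover P \subset E &
        I = [set X : {set T} | (X \subset cover P) &&
                               [forall D in P, #|X :&: D| <= 1]]].

From mathcomp Require Import all_boot zify.
Set Implicit Arguments. Unset Strict Implicit. Unset Printing Implicit Defensive.

(* In a unique expansion matroid every circuit has at most two elements.  Were
   c1, c2, c3 three elements of a circuit C, extend C - c1 to a base B; inside
   B + c1 extend C - c2 and C - c3 to bases B2 and B3, so that B3 = B + c1 - c3.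
   Then A = B2 - c3 expands to a base by c3 and also by c2, both of them in B.
   Hence independence is decided on pairs, and the partition is formed by the
   classes of parallel non-loops.  Conversely a partition matroid is decided on
   pairs, and there two distinct elements e1, e2 of a base expanding the same A
   would make A + e1 + e2 an independent set of size r(M) + 1. *)

Definition indep_of_pairs (T : finType) (I : {set {set T}}) : Prop :=
  forall X : {set T}, {in X &, forall x y, [set x; y] \in I} -> X \in I.

Definition partition_indep (T : finType) (P : {set {set T}}) : {set {set T}} :=
  [set X : {set T} | (X \subset cover P) && [forall D in P, #|X :&: D| <= 1]].

Definition nonloops (T : finType) (I : {set {set T}}) : {set T} :=
  [set a | [set a] \in I].

Definition parallel (T : finType) (I : {set {set T}}) : rel T :=
  fun a b => (a == b) || ([set a; b] \notin I).

Definition parallel_classes (T : finType) (I : {set {set T}}) :=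
  equivalence_partition (parallel I) (nonloops I).

Lemma leq_card_mrank (T : finType) (I : {set {set T}}) (X : {set T}) :
  X \in I -> #|X| <= mrank I.
Proof. by move=> XI; apply: (leq_bigmax_cond (F := fun X : {set T} => #|X|)). Qed.

Lemma partition_indep_of_pairs (T : finType) (P : {set {set T}}) :
  indep_of_pairs (partition_indep P).
Proof.
move=> X pairsX; rewrite inE; apply/andP; split.
  apply/subsetP => x xX; have := pairsX x x xX xX.
  by rewrite setUid inE => /andP [/subsetP -> //]; rewrite set11.
apply/forallP => D; apply/implyP => DP.
apply/card_le1_eqP => x y /setIP [xX xD] /setIP [yX yD].
have := pairsX x y xX yX; rewrite inE => /andP [_ /forallP /(_ D)].
by rewrite DP => /card_le1_eqP; apply; rewrite !inE eqxx ?orbT.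
Qed.

Section DownClosed.

Variables (T : finType) (I : {set {set T}}).
Hypothesis indep_down : forall X Y : {set T}, Y \in I -> X \subset Y -> X \in I.

Lemma unique_expansion_of_pairs : indep_of_pairs I -> unique_expansion I.
Proof.
move=> pairsI B A e1 e2 /setIdP [BI _] /setIdP [_ /eqP cardA] e1B e2B.
move=> /setIdP [e1AI /eqP card1] /setIdP [e2AI /eqP card2].
have notin_A e : #|e |: A| = mrank I -> e \notin A.
  move=> cardeA; apply/negP => eA; move: cardeA; rewrite (setUidPr _) ?sub1set //.
  have : 0 < #|A| by rewrite card_gt0; apply/set0Pn; exists e.
  lia.
have e1A := notin_A e1 card1; have e2A := notin_A e2 card2.
apply/eqP; apply/contraT => e12.
have pair_in Z x y : Z \in I -> x \in Z -> y \in Z -> [set x; y] \in I.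
  by move=> ZI xZ yZ; apply: indep_down ZI _; rewrite subUset !sub1set xZ.
have : e1 |: (e2 |: A) \in I.
  apply: pairsI => x y; rewrite !inE.
  move=> /or3P [/eqP-> | /eqP-> | xA] /or3P [/eqP-> | /eqP-> | yA];
    first [ exact: pair_in BI _ _
          | by apply: pair_in e1AI _ _; apply/setU1P; auto
          | by apply: pair_in e2AI _ _; apply/setU1P; auto ].
move/leq_card_mrank; rewrite !cardsU1 in_setU1 negb_or e12 e1A e2A; move: card1.
rewrite cardsU1 e1A; lia.
Qed.

End DownClosed.

Section Matroid.

Variables (T : finType) (E : {set T}) (I : {set {set T}}).
Hypothesis matroidI : is_matroid E I.

Let indep0 : set0 \in I. Proof. by case: matroidI. Qed.

Let indep_down (X Y : {set T}) : Y \in I -> X \subset Y -> X \in I.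
Proof. by case: matroidI => _ _ down _; apply: down. Qed.

Let indep_aug (X Y : {set T}) : X \in I -> Y \in I -> #|X| < #|Y| ->
  exists2 e, e \in Y :\: X & e |: X \in I.
Proof. by case: matroidI => _ _ _ aug; apply: aug. Qed.

Lemma bases_exist : exists B, B \in bases I.
Proof.
have [|B BI cardB] := @eq_bigmax_cond _ (mem I) (fun X : {set T} => #|X|).
  by rewrite card_gt0; apply/set0Pn; exists set0.
by exists B; rewrite inE BI /mrank cardB eqxx.
Qed.

Lemma extend_to_basis (S B Y : {set T}) :
  B \in bases I -> B \subset S -> Y \in I -> Y \subset S ->
  exists B', [/\ B' \in bases I, Y \subset B' & B' \subset S].
Proof.
move=> /setIdP [BI /eqP cardB] BS; have [n] := ubnP (mrank I - #|Y|).
elim: n Y => // n IH Y ltYn YI YS.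
have [ltY | geY] := ltnP #|Y| (mrank I); last first.
  by exists Y; split; rewrite // inE YI eqn_leq leq_card_mrank.
have [|e /setDP [eB eY] eYI] := indep_aug YI BI; first by rewrite cardB.
have [||B' [B'b eYB' B'S]] := IH (e |: Y) _ eYI.
- by rewrite cardsU1 eY; lia.
- by rewrite subUset sub1set (subsetP BS).
by exists B'; split; rewrite // (subset_trans (subsetUr _ _) eYB').
Qed.

Lemma notin_indep_of_dependent (C B : {set T}) (x : T) :
  C \notin I -> x \in C -> C :\ x \subset B -> B \in I -> x \notin B.
Proof.
move=> CnI xC CxB BI; apply: contra CnI => xB; apply: indep_down BI _.
by rewrite -(setD1K xC) subUset sub1set xB.
Qed.

Lemma eq_basis_setU1D1 (B B' : {set T}) (c d : T) :
  B \in bases I -> c \notin B -> d \in B ->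
  B' \in bases I -> B' \subset c |: B -> d \notin B' -> (c |: B) :\ d = B'.
Proof.
move=> /setIdP [_ /eqP cardB] cB dB /setIdP [_ /eqP cardB'] B'cB dB'.
apply/esym/eqP; rewrite eqEcard; apply/andP; split.
  apply/subsetP => x xB'; rewrite in_setD1 (subsetP B'cB) // andbT.
  by apply: contraNneq dB' => <-.
rewrite cardB' -(leq_add2l (d \in c |: B)) -cardsD1 cardsU1 cB cardB.
by rewrite in_setU1 dB orbT.
Qed.

Section UniqueExpansion.

Hypothesis uniqueI : unique_expansion I.

Lemma circuit_card_le2 (C : {set T}) :
  C \notin I -> (forall x, x \in C -> C :\ x \in I) -> #|C| <= 2.
Proof.
move=> CnI CxI; rewrite leqNgt; apply/card_gt2P.
move=> -[c1 [c2 [c3 [[c1C c2C c3C] [c12 c23 c31]]]]].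
have basis_indep B : B \in bases I -> B \in I by case/setIdP.
have [B0 B0b] := bases_exist.
have [B [Bb CB _]] :=
  extend_to_basis B0b (subsetT B0) (CxI c1 c1C) (subsetT _).
have c1B := notin_indep_of_dependent CnI c1C CB (basis_indep B Bb).
have inB c : c != c1 -> c \in C -> c \in B.
  by move=> cc1 cC; apply: (subsetP CB); rewrite !inE cc1.
have c2B : c2 \in B by rewrite inB // eq_sym.
have c3B := inB c3 c31 c3C.
set S := c1 |: B.
have CxS x : C :\ x \subset S.
  apply/subsetP => y /setD1P [_ yC]; rewrite in_setU1.
  by case: eqVneq => //= yc1; apply: inB.
have [B2 [B2b CB2 B2S]] :=
  extend_to_basis Bb (subsetU1 c1 B) (CxI c2 c2C) (CxS c2).
have [B3 [B3b CB3 B3S]] :=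
  extend_to_basis Bb (subsetU1 c1 B) (CxI c3 c3C) (CxS c3).
have c2B2 := notin_indep_of_dependent CnI c2C CB2 (basis_indep B2 B2b).
have c3B3 := notin_indep_of_dependent CnI c3C CB3 (basis_indep B3 B3b).
have c3B2 : c3 \in B2 by apply: (subsetP CB2); rewrite !inE c3C eq_sym c23.
have cardB2 : #|B2| = mrank I by case/setIdP: B2b => _ /eqP.
have S3I : S :\ c3 \in I.
  by rewrite (eq_basis_setU1D1 Bb c1B c3B B3b B3S c3B3) basis_indep.
set A := B2 :\ c3.
have cardA : #|A| = (mrank I).-1 by rewrite -cardB2 (cardsD1 c3 B2) c3B2.
have AI : A \in sfam I.
  by rewrite inE cardA eqxx (indep_down (basis_indep B2 B2b)) ?subsetDl.
have c3A_basis : c3 |: A \in bases I by rewrite setD1K.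
have c2A_basis : c2 |: A \in bases I.
  have rpos : 0 < mrank I by rewrite -cardB2 card_gt0; apply/set0Pn; exists c3.
  rewrite inE cardsU1 in_setD1 (negbTE c2B2) andbF cardA /= add1n prednK //.
  rewrite eqxx andbT.
  apply: indep_down S3I _; rewrite subUset sub1set !in_setD1 c23 in_setU1 c2B orbT.
  exact: setSD.
by move: c23; rewrite (uniqueI Bb AI c3B c2B c3A_basis c2A_basis) eqxx.
Qed.

Lemma unique_expansion_indep_of_pairs : indep_of_pairs I.
Proof.
move=> X; have [n] := ubnP #|X|; elim: n X => // n IH X ltXn pairsX.
have [le2 | gt2] := leqP #|X| 2.
  have [-> // | [x xX]] := set_0Vmem X.
  suff [y yX ->] : exists2 y, y \in X & X = [set x; y] by apply: pairsX.
  have [X1 | [y /setD1P [yx yX]]] := set_0Vmem (X :\ x).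
    by exists x; rewrite // setUid -(setD1K xX) X1 setU0.
  exists y => //; apply/eqP; rewrite eq_sym eqEcard subUset !sub1set xX yX /=.
  by rewrite cards2 eq_sym yx.
apply/contraT => XnI; suff : #|X| <= 2 by rewrite leqNgt gt2.
apply: (circuit_card_le2 XnI) => x xX; apply: IH.
  by move: ltXn; rewrite (cardsD1 x X) xX.
by move=> y z /setD1P [_ yX] /setD1P [_ zX]; apply: pairsX.
Qed.

End UniqueExpansion.

Lemma parallel_sym (a b : T) : parallel I a b = parallel I b a.
Proof. by rewrite /parallel eq_sym setUC. Qed.

Lemma parallel_trans (a b c : T) : b \in nonloops I ->
  parallel I a b -> parallel I b c -> parallel I a c.
Proof.
rewrite inE => bI /orP [/eqP -> // | abnI] /orP [/eqP <- | bcnI].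
  by rewrite /parallel abnI orbT.
rewrite /parallel; case: eqVneq => //= ac; apply/negP => acI.
have [|e /setDP [eac _] ebI] := indep_aug bI acI; first by rewrite cards1 cards2 ac.
move: eac; rewrite !inE => /orP [] /eqP eE; subst e.
  by move/negP: abnI.
by move/negP: bcnI; rewrite setUC.
Qed.

Lemma parallel_equiv : {in nonloops I & &, equivalence_rel (parallel I)}.
Proof.
move=> a b c aN bN cN; split; first by rewrite /parallel eqxx.
move=> ab; apply/idP/idP => [ac | bc]; last exact: parallel_trans ab bc.
by apply: parallel_trans aN _ ac; rewrite parallel_sym.
Qed.

Lemma indep_of_pairs_unique_partition : indep_of_pairs I -> unique_partition E I.
Proof.
move=> pairsI; set P := parallel_classes I.
have Ppart : partition P (nonloops I) := equivalence_partitionP parallel_equiv.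
exists P; rewrite (cover_partition Ppart); split => //.
  apply/subsetP => a; rewrite inE -sub1set.
  by case: matroidI => subE _ _ _; apply: subE.
apply/setP => X; rewrite inE; apply/idP/idP => [XI | /andP [XN /forallP XP]].
  apply/andP; split.
    by apply/subsetP => x xX; rewrite inE (indep_down XI) // sub1set.
  apply/forallP => D; apply/implyP => /imsetP [a aN ->].
  apply/card_le1_eqP => x y /setIP [xX /setIdP [xN ax]] /setIP [yX /setIdP [yN ay]].
  have /orP [/eqP // | /negP []] : parallel I x y.
    by rewrite -((parallel_equiv aN xN yN).2 ax).
  by apply: indep_down XI _; rewrite subUset !sub1set xX.
apply: pairsI => x y xX yX; have xN := subsetP XN x xX.
have [<- | xy] := eqVneq x y; first by rewrite setUid; move: xN; rewrite inE.
apply/contraT => xynI.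
have /implyP := XP [set z in nonloops I | parallel I x z].
move=> /(_ (imset_f _ xN)) /card_le1_eqP /(_ x y).
move: xN (subsetP XN y yX); rewrite !inE => xI yI.
rewrite xX yX xI yI /parallel eqxx xynI orbT => /(_ isT isT).
by move=> yx; move: xy; rewrite yx eqxx.
Qed.

End Matroid.

Theorem theorem7 (T : finType) (E : {set T}) (I : {set {set T}}) :
  is_matroid E I -> 0 < mrank I ->
  (unique_expansion I <-> unique_partition E I).
Proof.
move=> matroidI _; have [_ _ indep_down _] := matroidI; split => [uniqueI | ].
  exact: (indep_of_pairs_unique_partition matroidI
           (unique_expansion_indep_of_pairs matroidI uniqueI)).
case=> P [_ _ IP]; apply: unique_expansion_of_pairs indep_down _.
by rewrite IP; exact: partition_indep_of_pairs.
Qed.
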